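(* Let $\mathcal{L}$ be a finite set of localities and $\mathcal{G}$ a connected, undirected simple graph on $\mathcal{L}$. Let $\beta,\beta^{\textsc{int}}:\mathbb{Z}_{\ge 0}\to(0,\infty)$ be bounded functions with $\lim_{n\to\infty}\beta(n)=0$ and $\lim_{n\to\infty}\beta^{\textsc{int}}(n)=0$, and let $\delta>0$. Consider the continuous-time Markov chain $\mathbf{X}(t)=(X_u(t))_{u\in\mathcal{L}}$ on $\mathbb{Z}_{\ge0}^{\mathcal{L}}$ in which, with $X(t)=\sum_u X_u(t)$, for each $u$: $X_u\to X_u+1$ at rate $\sum_{v:(u,v)\in\mathcal{G}}\beta(X(t))X_v(t)+\beta^{\textsc{int}}(X(t))X_u(t)$ and $X_u\to X_u-1$ at rate $\delta X_u(t)$. For each $n\ge1$ let $\mathbf{X}^{(n)}$ be any state with $\mathbf{1}^\top\mathbf{X}^{(n)}=n$ and let $T_n$ be the hitting time of the all-zero state starting from $\mathbf{X}^{(n)}$. Then $$\lim_{n\to\infty}\frac{\delta\,\mathbb{E}[T_n]}{\ln n}=1.$$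
   Context: $\mathbf{1}$ is the all-ones vector; $\mathbf{1}^\top\mathbf{X}$ is the total number of infections. *)

From HB Require Import structures.
From mathcomp Require Import all_boot all_order all_algebra.
From mathcomp Require Import all_classical all_reals all_analysis.
Set Implicit Arguments. Unset Strict Implicit. Unset Printing Implicit Defensive.
Import Order.TTheory GRing.Theory Num.Theory.
Local Open Scope ring_scope.

Section Epidemic.
Variables (R : realType) (L : finType) (G : rel L).
Variables (beta betai : nat -> R) (delta : R).

Definition state := {ffun L -> nat}.

Definition ntotal (x : state) : nat := (\sum_(u : L) x u)%N.

Definition up_rate (x : state) (u : L) : R :=
  beta (ntotal x) * (\sum_(v : L | G u v) (x v)%:R) + betai (ntotal x) * (x u)%:R.

Definition down_rate (x : state) (u : L) : R := delta * (x u)%:R.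

Definition out_rate (x : state) : R := \sum_(u : L) (up_rate x u + down_rate x u).

Definition incr (x : state) (u : L) : state :=
  [ffun v => if v == u then (x v).+1 else x v].
Definition decr (x : state) (u : L) : state :=
  [ffun v => if v == u then (x v).-1 else x v].

(* hold_mass k x = E_x[ (mean holding time at Y_k) ; Y_0,...,Y_k all nonzero ],
   where Y is the embedded jump chain started at x. *)
Fixpoint hold_mass (k : nat) (x : state) : R :=
  if ntotal x == 0%N then 0 else
  match k with
  | 0 => (out_rate x)^-1
  | k'.+1 => \sum_(u : L)
       (up_rate x u / out_rate x * hold_mass k' (incr x u)
        + down_rate x u / out_rate x * hold_mass k' (decr x u))
  end.

(* expected hitting time of the all-zero state, started from x:
   E_x[T] = E_x[ sum of holding times before hitting 0 ] *)
Definition exp_hit (x : state) : \bar R :=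
  (\sum_(0 <= k <oo) (hold_mass k x)%:E)%E.

End Epidemic.

From HB Require Import structures.
From mathcomp Require Import all_boot all_order all_algebra.
From mathcomp Require Import all_classical all_reals all_analysis.
From mathcomp Require Import ring lra zify.
Import Order.TTheory GRing.Theory Num.Theory numFieldNormedType.Exports.
Local Open Scope classical_set_scope.
Local Open Scope ring_scope.

(* Only the total number of infections n matters: along the embedded jump chain it
   goes up at rate U(x) <= c_n n, with c_n = |L| beta(n) + betai(n) -> 0, and down at
   rate delta n; E_x[T] is the limit of the truncated sums E_x[sum_(k<K) 1/q(Y_k); k < T],
   which can be compared with functions of the total alone.
   Lower bound: g(m) = H_(min m n) / delta has delta m (g m - g (m-1)) <= 1 and births
   only increase it, so E_x[T] >= g(n) - g(n) P_x(T > K) for x at level n; the error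
   vanishes because the expected number of jumps before extinction is finite.
   Upper bound: a supersolution whose increments are (1 + e) / (delta n) once c_n is small,
   continued downwards by a backward recursion, gives E_x[T] <= (1 + e) H_n / delta + C.
   As H_n = ln n + O(1), delta E[T_n] / ln n -> 1.  The graph only enters through
   U(x) <= c_n n. *)

Set Implicit Arguments.
Unset Strict Implicit.
Unset Printing Implicit Defensive.

Lemma ntotal_incr (L : finType) (x : state L) u : ntotal (incr x u) = (ntotal x).+1.
Proof.
rewrite /ntotal (bigD1 u) //= [in RHS](bigD1 u) //= ffunE eqxx addSn.
by congr (_.+1 + _); apply: eq_bigr => v /negbTE vu; rewrite ffunE vu.
Qed.

Lemma ntotal_decr (L : finType) (x : state L) u :
  (0 < x u)%N -> ntotal (decr x u) = (ntotal x).-1.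
Proof.
rewrite /ntotal (bigD1 u) //= [in RHS](bigD1 u) //= ffunE eqxx.
under eq_bigr => v /negbTE vu do rewrite ffunE vu.
by case: (x u).
Qed.

Lemma backward_solution (R : realFieldType) (c : nat -> R) (B S K delta : R) :
  0 < delta -> 0 <= S -> 0 <= K -> 0 <= B -> (forall n, c n <= B) ->
  (\forall n \near \oo, S + c n * K <= delta * K) ->
  exists N (d : nat -> R), [/\ forall n, 0 <= d n, forall n, (N <= n)%N -> d n = K
                            & forall n, S + c n * d n.+1 <= delta * d n].
Proof.
move=> delta0 S0 K0 B0 cB [N _ /= hN].
pose d n := iter (N - n) (fun y => (S + B * y) / delta) K.
have d0 n : 0 <= d n.
  rewrite /d; elim: (N - n)%N => //= m IHm.
  exact: divr_ge0 (addr_ge0 S0 (mulr_ge0 B0 IHm)) (ltW delta0).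
have dK n : (N <= n)%N -> d n = K by rewrite /d -subn_eq0 => /eqP ->.
exists N, d; split => // n; have [Nn|nN] := leqP N n.
  by rewrite !dK ?hN // (leq_trans Nn).
rewrite {2}/d -(subnSK nN) /= -/(d n.+1) [leRHS]mulrC divfK ?gt_eqF // lerD2l.
by rewrite ler_wpM2r.
Qed.

Lemma series_harmonic_ge0 (R : numFieldType) n : 0 <= series (@harmonic R) n.
Proof. by apply: sumr_ge0 => k _; apply: harmonic_ge0. Qed.

Lemma series_div_le_harmonic (R : realFieldType) (d : nat -> R) (K : R) N n :
  (forall k, 0 <= d k) -> 0 <= K -> (forall k, (N <= k)%N -> d k = K) ->
  series (fun k => d k.+1 / k.+1%:R) n
    <= series (fun k => d k.+1 / k.+1%:R) N + K * series harmonic n.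
Proof.
move=> d0 K0 dK; have [nN|Nn] := leqP n N.
  rewrite -[leLHS]addr0 lerD ?(mulr_ge0 K0 (series_harmonic_ge0 _ _)) //.
  by rewrite -subr_ge0 sub_series_geq // sumr_ge0 // => k _; rewrite divr_ge0.
rewrite -lerBlDl (sub_series_geq _ (ltnW Nn)).
apply: (@le_trans _ _ (K * (series harmonic n - series harmonic N))).
  rewrite (sub_series_geq _ (ltnW Nn)) mulr_sumr; apply: ler_sum_nat => k /andP[Nk _].
  by rewrite dK // (leq_trans Nk).
by rewrite ler_wpM2l // lerBlDr lerDl series_harmonic_ge0.
Qed.

Lemma ln_sub_le (R : realType) (a b : R) : 0 < a -> 0 < b -> ln a - ln b <= a / b - 1.
Proof.
move=> a0 b0; have := @le_ln1Dx R (a / b - 1); rewrite [1 + _]addrC subrK ln_div ?posrE //.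
by apply; rewrite -subr_gt0 opprK subrK divr_gt0.
Qed.

Lemma ln_le_harmonic (R : realType) n : ln n.+1%:R <= series (@harmonic R) n.
Proof.
have := telescope_sumr (fun k => ln k.+1%:R : R) (leq0n n); rewrite ln1 subr0 => <-.
apply: ler_sum_nat => k _; apply: le_trans (ln_sub_le (ltr0Sn R k.+1) (ltr0Sn R k)) _.
by rewrite -natr1 mulrDl divff // mul1r [1 + _]addrC addrK.
Qed.

Lemma harmonic_le_ln (R : realType) n : (0 < n)%N -> series (@harmonic R) n <= 1 + ln n%:R.
Proof.
move=> n0; have := telescope_sumr (fun k => ln k%:R : R) n0; rewrite ln1 subr0 => <-.
rewrite /series /= big_ltn // invr1 lerD2l.
apply: ler_sum_nat => k /andP[k0 _]; rewrite -[leRHS]opprB lerNr.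
apply: le_trans (ln_sub_le _ (ltr0Sn R k)) _; first by rewrite ltr0n.
by rewrite -[X in X / _](addrK 1) natr1 mulrBl divff // mul1r addrC addKr.
Qed.

Lemma cvg_div_ln_of_harmonic (R : realType) (u : nat -> R) :
  (\forall n \near \oo, series harmonic n <= u n) ->
  (forall e, 0 < e -> exists C, \forall n \near \oo, u n <= (1 + e) * series harmonic n + C) ->
  u n / ln n%:R @[n --> \oo] --> (1 : R).
Proof.
move=> lo up; apply/cvgrPdist_le => e e0.
have [C hC] := up (e / 2) (divr_gt0 e0 (ltr0Sn R 1)).
set M := Num.max 1 ((e / 2)^-1 * (1 + e / 2 + C)).
near=> n.
have n0 : (0 < n)%N by near: n; exact: nbhs_infty_gt.
have lM : M <= ln (n%:R : R).
  near: n; apply: filterS (nbhs_infty_ger (expR M)) => n hn.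
  by rewrite -ler_expR lnK // posrE (lt_le_trans (expR_gt0 _) hn).
have lo_n : series harmonic n <= u n by near: n.
have up_n : u n <= (1 + e / 2) * series harmonic n + C by near: n.
set l := ln (n%:R : R) in lM *.
have l0 : 0 < l by apply: lt_le_trans _ lM; rewrite lt_max ltr01.
have lC : 1 + e / 2 + C <= e / 2 * l.
  by rewrite -ler_pdivrMl ?divr_gt0 //; apply: le_trans _ lM; rewrite le_max lexx orbT.
have lu : l <= u n.
  apply: le_trans lo_n; apply: le_trans (ln_le_harmonic _ _).
  by rewrite ler_ln ?posrE ?ltr0n // ler_nat.
have ul : u n <= (1 + e) * l.
  apply: le_trans up_n _; have hl := harmonic_le_ln R n0; rewrite -/l in hl.
  have : (1 + e / 2) * series harmonic n <= (1 + e / 2) * (1 + l).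
    by rewrite ler_wpM2l // addr_ge0 // divr_ge0 // ltW.
  lra.
have q1 : 1 <= u n / l by rewrite ler_pdivlMr // mul1r.
have q2 : u n / l <= 1 + e by rewrite ler_pdivrMr.
by rewrite ler_norml; apply/andP; split; lra.
Unshelve. all: by end_near.
Qed.

Section JumpChain.
Variables (R : realType) (L : finType) (G : rel L) (beta betai : nat -> R) (delta : R).
Hypotheses (beta_ge0 : forall n, 0 <= beta n) (betai_ge0 : forall n, 0 <= betai n).
Hypothesis delta_gt0 : 0 < delta.

Local Notation up := (up_rate G beta betai).
Local Notation down := (@down_rate R L delta).
Local Notation rate := (out_rate G beta betai delta).

Definition birth_rate (x : state L) : R := \sum_u up x u.

Definition up_bound (n : nat) : R := beta n * #|L|%:R + betai n.

Lemma up_rate_ge0 x u : 0 <= up x u.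
Proof. by rewrite /up_rate addr_ge0 // mulr_ge0 // sumr_ge0. Qed.

Lemma down_rate_ge0 x u : 0 <= down x u.
Proof. by rewrite /down_rate mulr_ge0 // ltW. Qed.

Lemma birth_rate_ge0 x : 0 <= birth_rate x.
Proof. by rewrite sumr_ge0 // => u _; apply: up_rate_ge0. Qed.

Lemma up_bound_ge0 n : 0 <= up_bound n.
Proof. by rewrite addr_ge0 // mulr_ge0. Qed.

Lemma birth_rate_le x : birth_rate x <= up_bound (ntotal x) * (ntotal x)%:R.
Proof.
rewrite /birth_rate /up_rate big_split /= -!mulr_sumr -natr_sum -/(ntotal x).
rewrite mulrDl lerD2r -mulrA ler_wpM2l // mulr_natl -sumr_const.
by apply: ler_sum => u _; rewrite natr_sum [leRHS](bigID (G u)) /= lerDl sumr_ge0.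
Qed.

Lemma out_rateE x : rate x = birth_rate x + delta * (ntotal x)%:R.
Proof. by rewrite /out_rate big_split /= /down_rate -mulr_sumr -natr_sum. Qed.

Lemma out_rate_gt0 x : ntotal x != 0%N -> 0 < rate x.
Proof.
by move=> nx; rewrite out_rateE ltr_wpDl ?birth_rate_ge0 // mulr_gt0 // ltr0n lt0n.
Qed.

Lemma out_rate_ge0 x : 0 <= rate x.
Proof. by rewrite out_rateE addr_ge0 ?birth_rate_ge0 // mulr_ge0 // ltW. Qed.

Definition jump_mean (x : state L) (h : state L -> R) : R :=
  \sum_u (up x u / rate x * h (incr x u) + down x u / rate x * h (decr x u)).

Lemma ler_jump_mean x (h1 h2 : state L -> R) :
  (forall y, h1 y <= h2 y) -> jump_mean x h1 <= jump_mean x h2.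
Proof.
move=> h12; apply: ler_sum => u _.
by rewrite lerD // ler_wpM2l // divr_ge0 ?up_rate_ge0 ?down_rate_ge0 ?out_rate_ge0.
Qed.

Lemma jump_meanBZ x (h1 h2 : state L -> R) a :
  jump_mean x (fun y => h1 y - a * h2 y) = jump_mean x h1 - a * jump_mean x h2.
Proof.
by rewrite /jump_mean mulr_sumr -sumrB; apply: eq_bigr => u _; ring.
Qed.

Lemma jump_mean_sum x K (h : nat -> state L -> R) :
  jump_mean x (fun y => \sum_(k < K) h k y) = \sum_(k < K) jump_mean x (h k).
Proof.
rewrite /jump_mean exchange_big; apply: eq_bigr => u _.
by rewrite big_split /= -!mulr_sumr.
Qed.

Lemma jump_mean_total x (F : nat -> R) : ntotal x != 0%N ->
  jump_mean x (fun y => F (ntotal y)) =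
  (birth_rate x * F (ntotal x).+1 + delta * (ntotal x)%:R * F (ntotal x).-1) / rate x.
Proof.
move=> nx; have -> : delta * (ntotal x)%:R = \sum_u down x u.
  by rewrite /down_rate -mulr_sumr -natr_sum.
rewrite mulrDl /birth_rate !mulr_suml -big_split /=; apply: eq_bigr => u _.
rewrite ntotal_incr mulrAC; congr (_ + _).
have [xu0|xu] := posnP (x u); first by rewrite /down_rate xu0 mulr0 !mul0r.
by rewrite ntotal_decr // mulrAC.
Qed.

Lemma jump_mean_cst a x : ntotal x != 0%N -> jump_mean x (fun=> a) = a.
Proof.
move=> nx; rewrite (jump_mean_total (fun=> a) nx) -mulrDl -out_rateE.
by rewrite mulrC mulKf // gt_eqF // out_rate_gt0.
Qed.

(* [occupation r k x] is E_x[r(Y_k); Y_0, ..., Y_k <> 0] for the embedded jump chain Y. *)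
Fixpoint occupation (r : state L -> R) (k : nat) (x : state L) : R :=
  if ntotal x == 0%N then 0 else
  if k is k'.+1 then jump_mean x (occupation r k') else r x.

Definition occupation_sum (r : state L -> R) (K : nat) (x : state L) : R :=
  \sum_(k < K) occupation r k x.

Definition survival : nat -> state L -> R := occupation (fun=> 1).

Definition holding_time (x : state L) : R := (rate x)^-1.

Lemma occupation0 r k x : ntotal x = 0%N -> occupation r k x = 0.
Proof. by case: k => [|k] /= ->. Qed.

Lemma occupation_sum0 r K x : ntotal x = 0%N -> occupation_sum r K x = 0.
Proof. by move=> x0; rewrite /occupation_sum big1 // => k _; rewrite occupation0. Qed.

Lemma occupation_sumS r K x : ntotal x != 0%N ->
  occupation_sum r K.+1 x = r x + jump_mean x (occupation_sum r K).
Proof.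
by move=> nx; rewrite /occupation_sum big_ord_recl /= (negbTE nx) jump_mean_sum.
Qed.

Lemma occupation_ge0 r k x : (forall y, 0 <= r y) -> 0 <= occupation r k x.
Proof.
move=> r0; elim: k x => [|k IHk] x /=; case: ifP => // /negbT nx.
by rewrite -(jump_mean_cst 0 nx); apply: ler_jump_mean.
Qed.

Lemma hold_massE k x : hold_mass G beta betai delta k x = occupation holding_time k x.
Proof.
elim: k x => [|k IHk] x //=; case: ifP => // _.
by apply: eq_bigr => u _; rewrite !IHk.
Qed.

Section Comparison.
Variable r : state L -> R.

Lemma drift_le (F : nat -> R) x n : ntotal x = n.+1 -> F n.+1 <= F n.+2 ->
  r x * rate x + up_bound n.+1 * n.+1%:R * (F n.+2 - F n.+1)
    <= delta * n.+1%:R * (F n.+1 - F n) ->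
  r x + jump_mean x (fun y => F (ntotal y)) <= F n.+1.
Proof.
move=> xn Fn hF; have q0 : 0 < rate x by rewrite out_rate_gt0 // xn.
rewrite jump_mean_total ?xn // -[r x](mulfK (lt0r_neq0 q0)) -mulrDl ler_pdivrMr //.
have := birth_rate_le x; rewrite out_rateE xn => hb.
have : birth_rate x * (F n.+2 - F n.+1) <= up_bound n.+1 * n.+1%:R * (F n.+2 - F n.+1).
  by rewrite ler_wpM2r // subr_ge0.
rewrite out_rateE xn in hF; nra.
Qed.

Lemma drift_ge (g : nat -> R) x n : ntotal x = n.+1 -> g n.+1 <= g n.+2 ->
  delta * n.+1%:R * (g n.+1 - g n) <= r x * rate x ->
  g n.+1 <= r x + jump_mean x (fun y => g (ntotal y)).
Proof.
move=> xn gn hg; have q0 : 0 < rate x by rewrite out_rate_gt0 // xn.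
rewrite jump_mean_total ?xn // -[r x](mulfK (lt0r_neq0 q0)) -mulrDl ler_pdivlMr //.
have := birth_rate_ge0 x; rewrite out_rateE xn in hg *; nra.
Qed.

Lemma occupation_sum_le (F : nat -> R) :
  (forall n, 0 <= F n) -> (forall n, F n <= F n.+1) ->
  (forall n x, ntotal x = n.+1 ->
     r x * rate x + up_bound n.+1 * n.+1%:R * (F n.+2 - F n.+1)
       <= delta * n.+1%:R * (F n.+1 - F n)) ->
  forall K x, occupation_sum r K x <= F (ntotal x).
Proof.
move=> F0 Fmono hF; elim=> [|K IHK] x; first by rewrite /occupation_sum big_ord0.
case xn: (ntotal x) => [|n]; first by rewrite occupation_sum0.
rewrite occupation_sumS ?xn //; apply: le_trans (drift_le xn (Fmono _) (hF _ _ xn)).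
by rewrite lerD2l; apply: ler_jump_mean.
Qed.

Lemma occupation_sum_ge (g : nat -> R) (M : R) :
  g 0%N = 0 -> (forall n, g n <= g n.+1) -> (forall n, g n <= M) ->
  (forall n x, ntotal x = n.+1 -> delta * n.+1%:R * (g n.+1 - g n) <= r x * rate x) ->
  forall K x, g (ntotal x) - M * survival K x <= occupation_sum r K x.
Proof.
move=> g0 gmono gM hg; elim=> [|K IHK] x.
  rewrite /occupation_sum big_ord0 /survival /=.
  by case: ifP => [/eqP->|_]; rewrite ?g0 ?mulr0 ?subr0 // mulr1 subr_le0.
case xn: (ntotal x) => [|n].
  by rewrite occupation_sum0 // /survival occupation0 // g0 mulr0 subr0.
rewrite occupation_sumS ?xn // /survival /= xn -/survival.
apply: le_trans (_ : r x + jump_mean x (fun y => g (ntotal y) - M * survival K y) <= _).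
  by rewrite jump_meanBZ addrA lerD2r; apply: drift_ge xn (gmono _) (hg _ _ xn).
by rewrite lerD2l; apply: ler_jump_mean.
Qed.

End Comparison.

Lemma survival_le1 k x : survival k x <= 1.
Proof.
elim: k x => [|k IHk] x; rewrite /survival /=; case: ifP => [_|/negbT nx]; rewrite ?ler01 //.
by apply: le_trans (ler_jump_mean _ IHk) _; rewrite jump_mean_cst.
Qed.

Lemma survival_decr k x : survival k.+1 x <= survival k x.
Proof.
elim: k x => [|k IHk] x; rewrite /survival /=; case: ifP => // /negbT nx.
  by apply: le_trans (ler_jump_mean _ (survival_le1 0)) _; rewrite jump_mean_cst.
exact: ler_jump_mean.
Qed.

Lemma survival_le_jump_count K x : K%:R * survival K x <= occupation_sum (fun=> 1) K x.
Proof.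
have /nonincreasing_seqP survival_mono := survival_decr^~ x.
rewrite mulr_natl -[X in _ *+ X](card_ord K) -sumr_const; apply: ler_sum => k _.
exact/survival_mono/ltnW.
Qed.

Lemma holding_time_ge0 x : 0 <= holding_time x.
Proof. by rewrite invr_ge0 out_rate_ge0. Qed.

Lemma occupation_sum_le_exp_hit K x :
  ((occupation_sum holding_time K x)%:E <= exp_hit G beta betai delta x)%E.
Proof.
rewrite /occupation_sum -(big_mkord xpredT (fun k => occupation _ k x)) -sumEFin.
under eq_bigr do rewrite -hold_massE.
apply: nneseries_lim_ge => k _ _.
by rewrite lee_fin hold_massE; apply/occupation_ge0/holding_time_ge0.
Qed.

Lemma exp_hit_le b x : (forall K, occupation_sum holding_time K x <= b) ->
  (exp_hit G beta betai delta x <= b%:E)%E.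
Proof.
move=> hb; apply: lime_le.
  apply: is_cvg_nneseries => k _ _.
  by rewrite lee_fin hold_massE; apply/occupation_ge0/holding_time_ge0.
apply: nearW => K; rewrite /= sumEFin big_mkord lee_fin.
by under eq_bigr do rewrite hold_massE; apply: hb.
Qed.

Lemma exp_hit_ge a b x :
  (forall K, a - b / K.+1%:R <= occupation_sum holding_time K.+1 x) ->
  (a%:E <= exp_hit G beta betai delta x)%E.
Proof.
move=> hab; have hK K : ((a - b / K.+1%:R)%:E <= exp_hit G beta betai delta x)%E.
  by apply: le_trans (occupation_sum_le_exp_hit K.+1 x); rewrite lee_fin.
case E: (exp_hit G beta betai delta x) => [r| |]; last 2 first.
- by rewrite leey.
- by have := hK 0%N; rewrite E leeNy_eq.
rewrite lee_fin; apply/ler_addgt0Pr => e e0.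
have := hK (Num.trunc (b / e)); rewrite E lee_fin.
have : b / e < (Num.trunc (b / e)).+1%:R by apply: truncnS_gt.
rewrite ltr_pdivrMr // -ltr_pdivrMl ?ltr0Sn // mulrC.
set t := b / _; lra.
Qed.

Section Asymptotics.
Variable B : R.
Hypothesis up_bound_le : forall n, up_bound n <= B.
Hypothesis up_bound_cvg0 : up_bound n @[n --> \oo] --> 0.

Local Notation exp_hit := (exp_hit G beta betai delta).

Let B_ge0 : 0 <= B.
Proof. exact: le_trans (up_bound_ge0 0) (up_bound_le 0). Qed.

Lemma jump_count_bounded :
  exists w : nat -> R, forall K x, occupation_sum (fun=> 1) K x <= w (ntotal x).
Proof.
pose S := B + delta; have S0 : 0 <= S := addr_ge0 B_ge0 (ltW delta_gt0).
have K0 : 0 <= 2 * S / delta by rewrite divr_ge0 ?mulr_ge0 // ltW.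
have ev : \forall n \near \oo, S + up_bound n * (2 * S / delta) <= delta * (2 * S / delta).
  near=> n; have cn : up_bound n <= delta / 2.
    by near: n; exact: cvgr_le _ up_bound_cvg0 _ (divr_gt0 delta_gt0 (ltr0Sn R 1)).
  have half : delta / 2 * (2 * S / delta) = S by field; apply: lt0r_neq0.
  have -> : delta * (2 * S / delta) = S + S by field; apply: lt0r_neq0.
  by rewrite lerD2l -[leRHS]half ler_wpM2r.
have [N [d [d0 _ hd]]] := backward_solution delta_gt0 S0 K0 B_ge0 up_bound_le ev.
exists (series (fun k => d k.+1)) => K x; apply: occupation_sum_le => //.
- by move=> n; apply: sumr_ge0 => k _.
- by move=> n; rewrite seriesSr lerDl.
move=> n y yn; rewrite !seriesSB mul1r out_rateE yn.
have := birth_rate_le y; rewrite yn => hb.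
have := hd n.+1; rewrite -(ler_pM2r (ltr0Sn _ n)).
have hc : up_bound n.+1 * n.+1%:R <= B * n.+1%:R by rewrite ler_wpM2r.
rewrite /S; lra.
Unshelve. all: by end_near.
Qed.

Lemma exp_hit_ge_harmonic x : ((series harmonic (ntotal x) / delta)%:E <= exp_hit x)%E.
Proof.
have [w hw] := jump_count_bounded; set M := ntotal x.
pose g j := series harmonic (minn j M) / delta.
have g_ge0 j : 0 <= g j by rewrite divr_ge0 ?series_harmonic_ge0 // ltW.
have g_mono j k : (minn j M <= minn k M)%N -> g j <= g k.
  move=> jk; rewrite ler_wpM2r ?invr_ge0 ?(ltW delta_gt0) // -subr_ge0 sub_series_geq //.
  by rewrite sumr_ge0 // => i _; apply: harmonic_ge0.
have -> : series harmonic M / delta = g M by rewrite /g minnn.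
apply: (exp_hit_ge (b := g M * w M)) => K.
apply: le_trans (occupation_sum_ge (g := g) (M := g M) _ _ _ _ K.+1 x); last first.
- move=> n y yn; rewrite /holding_time mulVf ?lt0r_neq0 ?out_rate_gt0 ?yn //.
  have [nM|Mn] := ltnP n M.
    rewrite /g (minn_idPl nM) (minn_idPl (ltnW nM)) -mulrBl seriesSB /=.
    rewrite [leLHS](_ : _ = 1) ?lexx //.
    by field; rewrite lt0r_neq0 // addrC natr1 pnatr_eq0.
  by rewrite /g (minn_idPr Mn) (minn_idPr (leqW Mn)) subrr mulr0 ler01.
- by move=> n; apply: g_mono; lia.
- by move=> n; apply: g_mono; lia.
- by rewrite /g min0n /series /= big_geq // mul0r.
rewrite lerD2l lerN2 -[leRHS]mulrA ler_wpM2l // ler_pdivlMr // mulrC.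
by apply: le_trans (survival_le_jump_count _ _) (hw _ _).
Qed.

Lemma exp_hit_le_harmonic e : 0 < e -> exists C, forall x,
  (exp_hit x <= ((1 + e) / delta * series harmonic (ntotal x) + C)%:E)%E.
Proof.
move=> e0; set K := (1 + e) / delta.
have K0 : 0 < K by rewrite divr_gt0 // ltr_wpDl.
have ev : \forall n \near \oo, 1 + up_bound n * K <= delta * K.
  near=> n; have cn : up_bound n <= e / K.
    by near: n; exact: cvgr_le _ up_bound_cvg0 _ (divr_gt0 e0 K0).
  have -> : delta * K = 1 + e by rewrite /K mulrCA divff ?mulr1 ?lt0r_neq0.
  by rewrite lerD2l -ler_pdivlMr.
have [N [d [d0 dK hd]]] := backward_solution delta_gt0 ler01 (ltW K0) B_ge0 up_bound_le ev.
set F := series (fun k => d k.+1 / k.+1%:R).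
exists (F N) => x; apply: exp_hit_le => k; rewrite addrC.
apply: le_trans (series_div_le_harmonic _ d0 (ltW K0) dK).
apply: occupation_sum_le => //.
- by move=> n; apply: sumr_ge0 => i _; rewrite divr_ge0.
- by move=> n; rewrite /F seriesSr lerDl divr_ge0.
move=> n y yn; rewrite /holding_time mulVf ?lt0r_neq0 ?out_rate_gt0 ?yn // !seriesSB.
have -> : delta * n.+1%:R * (d n.+1 / n.+1%:R) = delta * d n.+1.
  by rewrite mulrACA divff ?mulr1.
apply: le_trans (hd n.+1); rewrite lerD2l -mulrA ler_wpM2l ?up_bound_ge0 //.
by rewrite mulrCA ler_piMr // ler_pdivrMr // mul1r ler_nat.
Unshelve. all: by end_near.
Qed.

Lemma exp_hit_fin_num x : exp_hit x \is a fin_num.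
Proof.
have [C hC] := exp_hit_le_harmonic ltr01.
rewrite ge0_fin_numE; first by apply: le_lt_trans (hC x) _; rewrite ltry.
by apply: le_trans (occupation_sum_le_exp_hit 0 x); rewrite /occupation_sum big_ord0.
Qed.

End Asymptotics.

End JumpChain.

Theorem corollary3 (R : realType) (L : finType) (G : rel L)
  (G_sym : symmetric G) (G_irr : irreflexive G)
  (G_conn : forall u v : L, connect G u v)
  (beta betai : nat -> R)
  (beta_pos : forall n, 0 < beta n) (betai_pos : forall n, 0 < betai n)
  (beta_bnd : exists M : R, forall n, beta n <= M)
  (betai_bnd : exists M : R, forall n, betai n <= M)
  (beta_lim : beta n @[n --> \oo] --> 0)
  (betai_lim : betai n @[n --> \oo] --> 0)
  (delta : R) (delta_pos : 0 < delta)
  (X : nat -> state L)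
  (hX : forall n, (0 < n)%N -> ntotal (X n) = n) :
  ((delta%:E * exp_hit G beta betai delta (X n) * ((ln n%:R)^-1)%:E)%E
     @[n --> \oo] --> 1%:E).
Proof.
have beta_ge0 n := ltW (beta_pos n); have betai_ge0 n := ltW (betai_pos n).
have [B up_bound_le] : exists B, forall n, up_bound L beta betai n <= B.
  have [[Mb hMb] [Mbi hMbi]] := (beta_bnd, betai_bnd).
  by exists (Mb * #|L|%:R + Mbi) => n; rewrite lerD // ler_wpM2r.
have up_bound_cvg0 : up_bound L beta betai n @[n --> \oo] --> 0.
  by rewrite -[0]addr0 -[X in X + _](mul0r #|L|%:R); apply: cvgD => //; apply: cvgMl.
have fin := exp_hit_fin_num G beta_ge0 betai_ge0 delta_pos up_bound_le up_bound_cvg0.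
pose u n := delta * fine (exp_hit G beta betai delta (X n)).
have -> : (fun n => delta%:E * exp_hit G beta betai delta (X n) * ((ln n%:R)^-1)%:E)%E
    = (fun n => (u n / ln n%:R)%:E).
  by apply: funext => n; rewrite -(fineK (fin (X n))) -!EFinM.
apply: cvg_EFin; first exact: nearW.
apply: cvg_div_ln_of_harmonic.
  near=> n; have n0 : (0 < n)%N by near: n; exact: nbhs_infty_gt.
  have := exp_hit_ge_harmonic G beta_ge0 betai_ge0 delta_pos up_bound_le up_bound_cvg0 (X n).
  by rewrite hX // -(fineK (fin (X n))) lee_fin ler_pdivrMr // mulrC.
move=> e e0.
have [C hC] := exp_hit_le_harmonic G beta_ge0 betai_ge0 delta_pos up_bound_le up_bound_cvg0 e0.
exists (delta * C); near=> n; have n0 : (0 < n)%N by near: n; exact: nbhs_infty_gt.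
have := hC (X n); rewrite hX // -(fineK (fin (X n))) lee_fin -(ler_pM2l delta_pos).
by rewrite mulrDr mulrA mulrCA divff ?mulr1 // lt0r_neq0.
Unshelve. all: by end_near.
Qed.
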